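(* Let $(V,M)$ be a valuation domain with quotient field $L$, $M\neq0$, of the form $V=K+M$ with $K$ a subfield of $V$. Let $D$ be a subring of $K$ with quotient field $F$ and let $R=D+M$. Then: (10) $R$ is a local AV-domain $\iff$ $V$ is a DVR, $D=F$ is a field with $[K:F]<\infty$, and $F\subseteq K$ is a root extension. (11) $R$ is a quasilocal API-domain $\iff$ $V$ is a DVR, $D=F$ is a field, and $F\subseteq K$ is a bounded root extension (i.e. $K/F$ is purely inseparable of bounded exponent or $K$ is finite). (12) $R$ is a local API-domain $\iff$ $V$ is a DVR, $D=F$ is a field with $[K:F]<\infty$, and $F\subseteq K$ is a bounded root extension. (13) $R$ is a RAV-domain $\iff$ $V$ is a rational valuation domain, $D=F$ is a field, and $F\subseteq K$ is a root extension.
   Context: Quasilocal: unique maximal ideal; local: Noetherian and quasilocal. A root extension $R\subseteq S$: each $s\in S$ has some power in $R$; bounded if one exponent works for all $s$. AV-domain: for nonzero $a,b$ there is $n$ with $a^n\mid b^n$ or $b^n\mid a^n$. API-domain: for every nonempty subset $\{d_\alpha\}$ of nonzero elements some $n$ makes $(\{d_\alpha^n\})$ principal. DVR: local PID not a field. Rational valuation domain: valuation domain with value group order-isomorphic to a subgroup of $(\mathbb{Q},+)$. For a domain not a field, an almost uniformizing parameter is $a$ such that every nonzero nonunit $y$ satisfies $y^m=ua^n$ for some natural numbers $m,n$ and unit $u$; a RAV-domain is a domain having one. *)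

(* All rings are subrings of an ambient field L,
   represented as predicates  L -> Prop. *)
From mathcomp Require Import all_boot all_order all_algebra.
Set Implicit Arguments. Unset Strict Implicit. Unset Printing Implicit Defensive.
Import Order.TTheory GRing.Theory Num.Theory.
Local Open Scope ring_scope.

Section Defs.
Variable L : fieldType.
Implicit Types (R S K F I J : L -> Prop).

Definition subring R : Prop :=
  R 0 /\ R 1 /\ (forall x y, R x -> R y -> R (x + y)) /\
  (forall x, R x -> R (- x)) /\ (forall x y, R x -> R y -> R (x * y)).

Definition subfield K : Prop :=
  subring K /\ (forall x, K x -> x != 0 -> K x^-1).

Definition is_ideal R I : Prop :=
  (forall x, I x -> R x) /\ I 0 /\ (forall x y, I x -> I y -> I (x + y)) /\
  (forall r x, R r -> I x -> I (r * x)).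

Definition maximal_ideal R I : Prop :=
  is_ideal R I /\ ~ I 1 /\
  (forall J, is_ideal R J -> ~ J 1 -> (forall x, I x -> J x) -> forall x, J x -> I x).

Definition quasilocal R : Prop :=
  exists M, maximal_ideal R M /\
    forall N, maximal_ideal R N -> forall x, N x <-> M x.

Definition noetherian R : Prop :=
  forall I : nat -> L -> Prop, (forall n, is_ideal R (I n)) ->
    (forall n x, I n x -> I n.+1 x) ->
    exists N, forall n x, (N <= n)%N -> I n x -> I N x.

Definition local R : Prop := noetherian R /\ quasilocal R.

Definition unit_in R x : Prop := R x /\ exists y, R y /\ x * y = 1.

Definition is_field R : Prop := forall x, R x -> x != 0 -> unit_in R x.

Definition dvd_in R a b : Prop := exists c, R c /\ b = a * c.

Definition principal_ideal R I : Prop :=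
  exists a, R a /\ forall x, I x <-> dvd_in R a x.

Definition PID R : Prop := forall I, is_ideal R I -> principal_ideal R I.

Definition DVR R : Prop := local R /\ PID R /\ ~ is_field R.

Definition ideal_gen R S : L -> Prop :=
  fun x => forall I, is_ideal R I -> (forall y, S y -> I y) -> I x.

Definition AV_domain R : Prop :=
  forall a b, R a -> R b -> a != 0 -> b != 0 ->
    exists n, (0 < n)%N /\ (dvd_in R (a ^+ n) (b ^+ n) \/ dvd_in R (b ^+ n) (a ^+ n)).

Definition API_domain R : Prop :=
  forall S, (forall x, S x -> R x /\ x != 0) -> (exists x, S x) ->
    exists n, (0 < n)%N /\
      principal_ideal R (ideal_gen R (fun y => exists d, S d /\ y = d ^+ n)).

Definition almost_unif_param R a : Prop :=
  R a /\ forall y, R y -> y != 0 -> ~ unit_in R y ->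
    exists m n u, (0 < m)%N /\ (0 < n)%N /\ unit_in R u /\ y ^+ m = u * a ^+ n.

Definition RAV_domain R : Prop :=
  ~ is_field R /\ exists a, almost_unif_param R a.

(* V is a valuation domain with quotient field L *)
Definition valuation_domain V : Prop :=
  subring V /\ forall x, x != 0 -> V x \/ V x^-1.

(* value group L^*/U(V) (ordered by  [x] <= [y] iff y/x in V) is
   order-isomorphic to a subgroup of (Q,+): given by v : L^* -> Q *)
Definition rational_valuation_domain V : Prop :=
  valuation_domain V /\
  exists v : L -> rat,
    (forall x y, x != 0 -> y != 0 -> v (x * y) = v x + v y) /\
    (forall x y, x != 0 -> y != 0 -> (v x <= v y <-> V (y / x))).

Definition root_ext F K : Prop :=
  forall s, K s -> exists n, (0 < n)%N /\ F (s ^+ n).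

Definition bounded_root_ext F K : Prop :=
  exists n, (0 < n)%N /\ forall s, K s -> F (s ^+ n).

(* [K:F] < oo : K is spanned over F by finitely many elements *)
Definition finite_degree F K : Prop :=
  exists s : seq L, (forall i, (i < size s)%N -> K s`_i) /\
    forall x, K x -> exists c : seq L, size c = size s /\
      (forall i, (i < size c)%N -> F c`_i) /\
      x = \sum_(i < size s) c`_i * s`_i.

Definition same_set S1 S2 : Prop := forall x, S1 x <-> S2 x.

End Defs.

From mathcomp Require Import all_boot all_order all_algebra.
From mathcomp Require Import ring.
From Stdlib Require Import Classical ClassicalEpsilon.
Import Order.TTheory GRing.Theory Num.Theory.
Set Implicit Arguments. Unset Strict Implicit. Unset Printing Implicit Defensive.
Local Open Scope ring_scope.

(* Every element of [V] is congruent modulo [M] to a unique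
   residue in [K]; hence [R] meets [K] in [D], and when [D] is a field, [R] is
   quasilocal with maximal ideal [M] and its units are the units of [V] lying
   in [R].  Each property of [R] is then tested on powers: [(b / a) ^+ n] lies
   in [R] exactly when the [n]-th power of the residue of [b / a] lies in [D],
   which yields the (bounded) root extension conditions; conversely, testing
   on [k * m0], [m0] and [d ^- j * m0] ([m0] in [M], [k] in [K], [d] in [D])
   forces [k ^+ n] and [d^-1] into [D].  An ideal of [R] lying between
   [r0 * M] and [r0 * V] is determined by an [F]-subspace of [K], so [R] is
   noetherian iff [V] is a DVR and [K] is finite over [F].  For (13), an
   almost uniformizing parameter [a] measures every value as a rational
   multiple of the value of [a]. *)

Lemma chain_mono (T : Type) (P : nat -> T -> Prop) :
  (forall j x, P j x -> P j.+1 x) -> forall i j x, (i <= j)%N -> P i x -> P j x.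
Proof.
move=> hP i j x /subnK <-; elim: (j - i)%N => [|k IH] //= Pi.
by rewrite addSn; apply: hP; apply: IH.
Qed.

Section SubringsAndIdeals.
Variable L : fieldType.
Implicit Types (S T I : L -> Prop) (x y k l r u g : L).

Lemma subring0 S : subring S -> S 0. Proof. by case. Qed.
Lemma subring1 S : subring S -> S 1. Proof. by case=> _ []. Qed.
Lemma subringD S x y : subring S -> S x -> S y -> S (x + y).
Proof. by case=> _ [_ [hD _]]; apply: hD. Qed.
Lemma subringN S x : subring S -> S x -> S (- x).
Proof. by case=> _ [_ [_ [hN _]]]; apply: hN. Qed.
Lemma subringM S x y : subring S -> S x -> S y -> S (x * y).
Proof. by case=> _ [_ [_ [_ hM]]]; apply: hM. Qed.
Lemma subringB S x y : subring S -> S x -> S y -> S (x - y).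
Proof. by move=> hS Sx Sy; apply: subringD hS Sx (subringN hS Sy). Qed.
Lemma subringX S x n : subring S -> S x -> S (x ^+ n).
Proof.
move=> hS Sx; elim: n => [|n IH]; first by rewrite expr0; apply: subring1.
by rewrite exprS; apply: subringM.
Qed.

Lemma subfield_subring S : subfield S -> subring S. Proof. by case. Qed.
Lemma subfieldV S x : subfield S -> S x -> x != 0 -> S x^-1.
Proof. by case=> _ hV; apply: hV. Qed.

Lemma ideal_sub S I x : is_ideal S I -> I x -> S x.
Proof. by case=> hI _; apply: hI. Qed.
Lemma ideal0 S I : is_ideal S I -> I 0. Proof. by case=> _ []. Qed.
Lemma idealD S I x y : is_ideal S I -> I x -> I y -> I (x + y).
Proof. by case=> _ [_ [hD _]]; apply: hD. Qed.
Lemma ideal_mull S I r x : is_ideal S I -> S r -> I x -> I (r * x).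
Proof. by case=> _ [_ [_ hM]]; apply: hM. Qed.
Lemma ideal_mulr S I r x : is_ideal S I -> S r -> I x -> I (x * r).
Proof. by rewrite mulrC; apply: ideal_mull. Qed.
Lemma idealN S I x : subring S -> is_ideal S I -> I x -> I (- x).
Proof.
by move=> hS hI Ix; rewrite -mulN1r; apply: ideal_mull hI (subringN hS (subring1 hS)) Ix.
Qed.
Lemma idealB S I x y : subring S -> is_ideal S I -> I x -> I y -> I (x - y).
Proof. by move=> hS hI Ix Iy; apply: idealD hI Ix (idealN hS hI Iy). Qed.
Lemma idealX S I x n : subring S -> is_ideal S I -> I x -> (0 < n)%N -> I (x ^+ n).
Proof.
move=> hS hI Ix; have Sx := ideal_sub hI Ix; case: n => // n _.
by rewrite exprS; apply: ideal_mulr hI _ Ix; apply: subringX hS Sx.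
Qed.

Lemma ideal_mulB S I x y k l : subring S -> is_ideal S I -> S x -> S l ->
  I (x - k) -> I (y - l) -> I (x * y - k * l).
Proof.
move=> hS hI Sx Sl Ixk Iyl.
have -> : x * y - k * l = x * (y - l) + l * (x - k) by ring.
exact: idealD hI (ideal_mull hI Sx Iyl) (ideal_mull hI Sl Ixk).
Qed.

Lemma ideal_expB S I x k n : subring S -> is_ideal S I -> S x -> S k ->
  I (x - k) -> I (x ^+ n - k ^+ n).
Proof.
move=> hS hI Sx Sk Ixk; elim: n => [|n IH]; first by rewrite subrr; apply: ideal0 hI.
by rewrite !exprS; apply: ideal_mulB hI Sx (subringX n hS Sk) Ixk IH.
Qed.

Lemma maximal_ideal_ideal S I : maximal_ideal S I -> is_ideal S I. Proof. by case. Qed.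
Lemma maximal_ideal_proper S I : maximal_ideal S I -> ~ I 1. Proof. by case=> _ []. Qed.

Lemma unit_inE S u : unit_in S u <-> [/\ S u, S u^-1 & u != 0].
Proof.
split=> [[Su [y [Sy uy]]]|[Su Sui u0]]; last by split=> //; exists u^-1; rewrite divff.
have u0 : u != 0 by apply: contra_eq_neq uy => ->; rewrite mul0r eq_sym oner_neq0.
by have -> : u^-1 = y by rewrite -(mulKf u0 y) uy mulr1.
Qed.

Lemma unit_inM S u w : subring S -> unit_in S u -> unit_in S w -> unit_in S (u * w).
Proof.
move=> hS /unit_inE[Su Sui u0] /unit_inE[Sw Swi w0]; apply/unit_inE.
by rewrite invfM mulf_neq0 //; split=> //; apply: subringM.
Qed.

Lemma unit_inX S u n : subring S -> unit_in S u -> unit_in S (u ^+ n).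
Proof.
move=> hS /unit_inE[Su Sui u0]; apply/unit_inE.
by rewrite -exprVn expf_neq0 //; split=> //; apply: subringX.
Qed.

Lemma unit_inV S u : unit_in S u -> unit_in S u^-1.
Proof. by move=> /unit_inE[Su Sui u0]; apply/unit_inE; rewrite invrK invr_eq0. Qed.

Lemma unit_in_sub S T u : (forall x, S x -> T x) -> unit_in S u -> unit_in T u.
Proof. by move=> ST /unit_inE[Su Sui u0]; apply/unit_inE; split; auto. Qed.

Lemma unit_not_ideal S I u : is_ideal S I -> ~ I 1 -> unit_in S u -> ~ I u.
Proof.
by move=> hI nI1 [_ [y [Sy uy]]] Iu; apply: nI1; rewrite -uy; apply: ideal_mulr hI Sy Iu.
Qed.

Lemma dvd_in_ideal S g : subring S -> S g -> is_ideal S (dvd_in S g).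
Proof.
move=> hS Sg; split; first by move=> x [c [Sc ->]]; apply: subringM.
split; first by exists 0; rewrite mulr0; split=> //; apply: subring0.
split.
  move=> x y [c [Sc ->]] [e [Se ->]]; exists (c + e); rewrite mulrDr.
  by split=> //; apply: subringD.
by move=> r x Sr [c [Sc ->]]; exists (r * c); split; [apply: subringM|rewrite mulrCA].
Qed.

Lemma dvd_in_refl S g : subring S -> dvd_in S g g.
Proof. by move=> hS; exists 1; split; [apply: subring1|rewrite mulr1]. Qed.

Lemma ideal_gen_principalP S T : subring S -> principal_ideal S (ideal_gen S T) ->
  exists2 g, (forall I, is_ideal S I -> (forall y, T y -> I y) -> I g) &
             (forall y, T y -> dvd_in S g y).
Proof.
move=> hS [g [Sg hg]]; exists g; first exact/hg/dvd_in_refl.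
by move=> y Ty; apply/hg => I _; apply.
Qed.

Lemma ideal_gen_principal S T g : subring S -> S g -> T g ->
  (forall y, T y -> dvd_in S g y) -> principal_ideal S (ideal_gen S T).
Proof.
move=> hS Sg Tg gT; exists g; split=> // x; split; first by apply; [apply: dvd_in_ideal|].
by move=> [c [Sc ->]] I hI TI; apply: ideal_mulr hI Sc (TI g Tg).
Qed.

Lemma chain_union_ideal S (I : nat -> L -> Prop) : (forall n, is_ideal S (I n)) ->
  (forall n x, I n x -> I n.+1 x) -> is_ideal S (fun x => exists n, I n x).
Proof.
move=> hI hinc; have mono := chain_mono hinc.
split; first by move=> x [n]; apply: ideal_sub (hI n).
split; first by exists 0%N; apply: ideal0 (hI 0%N).
split; last by move=> r x Sr [n Ix]; exists n; apply: ideal_mull (hI n) Sr Ix.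
move=> x y [n Ix] [k Iy]; exists (maxn n k).
by apply: idealD (hI _) (mono _ _ _ _ Ix) (mono _ _ _ _ Iy); rewrite ?leq_maxl ?leq_maxr.
Qed.

Lemma PID_noetherian S : subring S ->
  (forall I, is_ideal S I -> principal_ideal S I) -> noetherian S.
Proof.
move=> hS hPID I hI hinc.
have [a [Sa ha]] := hPID _ (chain_union_ideal hI hinc).
have [N IaN] : exists n, I n a by apply/ha/dvd_in_refl.
exists N => n x _ /(ex_intro (fun n => I n x) n) /ha [c [Sc ->]].
exact: ideal_mulr (hI N) Sc IaN.
Qed.

Definition frac_field (D : L -> Prop) : L -> Prop :=
  fun x => exists a b, D a /\ D b /\ b != 0 /\ x = a / b.

Definition dplusm (D M : L -> Prop) : L -> Prop :=
  fun x => exists d m, D d /\ M m /\ x = d + m.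

Section Fraction.
Variable D : L -> Prop.
Hypothesis hD : subring D.

Lemma frac_field_id x : D x -> frac_field D x.
Proof. by move=> Dx; exists x, 1; rewrite divr1 oner_neq0; do !split=> //; apply: subring1. Qed.

Lemma frac_field_subfield : subfield (frac_field D).
Proof.
have hM x y : frac_field D x -> frac_field D y -> frac_field D (x * y).
  move=> [a [b [Da [Db [b0 ->]]]]] [c [d [Dc [Dd [d0 ->]]]]].
  exists (a * c), (b * d); rewrite mulf_neq0 //; do !split; try exact: subringM.
  by field; rewrite b0 d0.
split; last by move=> _ [a [b [Da [Db [b0 ->]]]]] ab0; exists b, a; rewrite invf_div;
  do !split => //; apply: contraNneq ab0 => ->; rewrite mul0r.
split; first exact: frac_field_id (subring0 hD).
split; first exact: frac_field_id (subring1 hD).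
split; last split=> //.
  move=> _ _ [a [b [Da [Db [b0 ->]]]]] [c [d [Dc [Dd [d0 ->]]]]].
  exists (a * d + c * b), (b * d); rewrite mulf_neq0 //.
  do !split; last by field; rewrite b0 d0.
    exact: subringD hD (subringM hD Da Dd) (subringM hD Dc Db).
  exact: subringM.
by move=> x Fx; rewrite -mulN1r; apply: hM Fx; apply: frac_field_id (subringN hD (subring1 hD)).
Qed.

Lemma frac_field_min K : subfield K -> (forall y, D y -> K y) ->
  forall x, frac_field D x -> K x.
Proof.
move=> hK DK _ [a [b [Da [Db [b0 ->]]]]].
by apply: subringM (subfield_subring hK) (DK _ Da) (subfieldV hK (DK _ Db) b0).
Qed.

Lemma subfield_frac_field x : subfield D -> frac_field D x -> D x.
Proof.
by move=> hDf [a [b [Da [Db [b0 ->]]]]]; apply: subringM hD Da (subfieldV hDf Db b0).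
Qed.

Lemma same_frac_field_subfield : same_set D (frac_field D) <-> subfield D.
Proof.
split=> [hDF|hDf x]; last by split; [exact: frac_field_id|exact: subfield_frac_field].
split=> // d Dd d0; apply/hDF; exists 1, d; rewrite div1r.
by do !split=> //; apply: subring1.
Qed.

End Fraction.
End SubringsAndIdeals.

Lemma rat_commensurable (p q : rat) : 0 < p -> 0 < q ->
  exists m n : nat, [/\ (0 < m)%N, (0 < n)%N & m%:R * p = n%:R * q].
Proof.
move=> p0 q0; pose r := q / p; have r0 : 0 < r by rewrite divr_gt0.
have [m em] : exists m : nat, numq r = m%:Z.
  by case E: (numq r) => [m|m]; [exists m|move: r0; rewrite -numq_gt0 E].
have [n en] : exists n : nat, denq r = n%:Z.
  by case E: (denq r) => [n|n]; [exists n|move: (denq_gt0 r); rewrite E].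
have m0 : (0 < m)%N by rewrite -(ltz_nat 0) -em numq_gt0.
have n0 : (0 < n)%N by rewrite -(ltz_nat 0) -en denq_gt0.
have p0' : p != 0 by rewrite gt_eqF.
have n0' : (n%:R : rat) != 0 by rewrite pnatr_eq0 -lt0n.
exists m, n; split=> //.
have : (m%:R / n%:R : rat) = q / p by rewrite -[RHS]/r -(divq_num_den r) em en.
by move/eqP; rewrite eqr_div // => /eqP ->; rewrite mulrC.
Qed.

Section ValuationDomain.
Variables (L : fieldType) (V M : L -> Prop).
Hypotheses (hV : valuation_domain V) (hM : maximal_ideal V M).
Implicit Types (I J : L -> Prop) (a b r u w x y z : L).

Lemma valuation_subring : subring V. Proof. by case: hV. Qed.

Let VS := valuation_subring.
Let MI := maximal_ideal_ideal hM.
Let M1 := maximal_ideal_proper hM.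

Lemma valuation_dvd_total a b : dvd_in V a b \/ dvd_in V b a.
Proof.
have [->|a0] := eqVneq a 0; first by right; exists 0; rewrite mulr0; split=> //; apply: subring0.
have [->|b0] := eqVneq b 0; first by left; exists 0; rewrite mulr0; split=> //; apply: subring0.
case: hV => _ /(_ (b / a)); rewrite mulf_neq0 ?invr_eq0 // => /(_ isT) [Vba|Vab].
  by left; exists (b / a); split=> //; rewrite mulrC divfK.
by right; exists (a / b); rewrite -invf_div; split=> //; rewrite invf_div mulrC divfK.
Qed.

Lemma valuation_ideal_total I J : is_ideal V I -> is_ideal V J ->
  (forall x, I x -> J x) \/ (forall x, J x -> I x).
Proof.
move=> hI hJ; case: (classic (forall x, I x -> J x)) => [IJ|/not_all_ex_not [a nIJa]].
  by left.
have [Ia nJa] : I a /\ ~ J a by apply: imply_to_and.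
right=> b Jb.
case: (valuation_dvd_total a b) => [[c [Vc ->]]|[c [Vc ea]]]; first exact: ideal_mulr hI Vc Ia.
by case: nJa; rewrite ea; apply: ideal_mulr hJ Vc Jb.
Qed.

Lemma proper_ideal_subM I : is_ideal V I -> ~ I 1 -> forall x, I x -> M x.
Proof.
move=> hI nI1; case: (valuation_ideal_total hI MI) => // IM x Ix.
by case: hM => _ [_ /(_ I hI nI1 IM)]; apply.
Qed.

Lemma valuation_quasilocal : quasilocal V.
Proof.
exists M; split=> // N [hN [nN1 Nmax]] x; split; first exact: proper_ideal_subM.
exact: Nmax MI M1 (proper_ideal_subM hN nN1) x.
Qed.

Lemma notM_unit x : V x -> ~ M x -> V x^-1.
Proof.
move=> Vx nMx; have x0 : x != 0 by apply/eqP => x0; apply: nMx; rewrite x0; apply: ideal0 MI.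
apply: NNPP => nVi; apply: nMx.
apply: proper_ideal_subM (dvd_in_ideal VS Vx) _ _ (dvd_in_refl x VS).
move=> [c [Vc e]]; apply: nVi; suff -> : x^-1 = c by [].
by rewrite -(mulKf x0 c) -e mulr1.
Qed.

Lemma unit_notM x : x != 0 -> V x^-1 -> ~ M x.
Proof. by move=> x0 Vxi Mx; apply: M1; rewrite -(divff x0); apply: ideal_mulr MI Vxi Mx. Qed.

Lemma notV_invM x : x != 0 -> ~ V x -> M x^-1.
Proof.
case: hV => _ /[apply] + nVx; case=> // Vxi; apply: NNPP => nMxi.
by apply: nVx; rewrite -(invrK x); apply: notM_unit.
Qed.

Lemma valuation_root_closed z n : (0 < n)%N -> V (z ^+ n) -> V z.
Proof.
move=> n0 Vzn; have [->|z0] := eqVneq z 0; first exact: subring0.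
apply: NNPP => nVz; apply: M1.
rewrite -(expr1n _ n) -(divff z0) exprMn; apply: ideal_mull MI Vzn _.
exact: idealX VS MI (notV_invM z0 nVz) n0.
Qed.

Lemma unit_in_notM w : unit_in V w -> ~ M w.
Proof. exact: unit_not_ideal MI M1. Qed.

Lemma unit_mul_pow_inj z u w p q : M z -> z != 0 -> unit_in V u -> unit_in V w ->
  u * z ^+ p = w * z ^+ q -> p = q.
Proof.
have key u' w' p' q' : unit_in V u' -> unit_in V w' -> M z -> z != 0 ->
    u' * z ^+ p' = w' * z ^+ q' -> ~ (p' < q')%N.
  move=> uu' /unit_inE[Vw' _ _] Mz z0 e lt; apply: (unit_in_notM uu').
  have -> : u' = w' * z ^+ (q' - p').
    apply: (mulIf (expf_neq0 p' z0)).
    by rewrite e -mulrA -exprD subnK // ltnW.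
  by apply: ideal_mull MI Vw' (idealX VS MI Mz _); rewrite subn_gt0.
move=> Mz z0 uu uw e; case: (ltngtP p q) => // lt; exfalso.
  exact: key uu uw Mz z0 e lt.
exact: key uw uu Mz z0 (esym e) lt.
Qed.

Definition ext_ideal I : L -> Prop := fun x => exists r v, I r /\ V v /\ x = r * v.

Lemma ext_ideal_self I x : I x -> ext_ideal I x.
Proof. by move=> Ix; exists x, 1; rewrite mulr1; do !split=> //; apply: subring1. Qed.

Lemma ext_ideal_ideal I : (forall x, I x -> V x) -> (exists x, I x) ->
  is_ideal V (ext_ideal I).
Proof.
move=> IV [x0 Ix0].
split; first by move=> _ [r [v [Ir [Vv ->]]]]; apply: subringM (IV _ Ir) Vv.
split; first by exists x0, 0; rewrite mulr0; do !split=> //; apply: subring0.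
split; last by move=> s _ Vs [r [v [Ir [Vv ->]]]]; exists r, (s * v); rewrite mulrCA;
  do !split=> //; apply: subringM.
move=> _ _ [r1 [v1 [Ir1 [Vv1 ->]]]] [r2 [v2 [Ir2 [Vv2 ->]]]].
case: (valuation_dvd_total r1 r2) => [[c [Vc ->]]|[c [Vc ->]]].
  exists r1, (v1 + c * v2); rewrite mulrDr mulrA; do !split=> //.
  by apply: subringD Vv1 (subringM VS Vc Vv2).
exists r2, (c * v1 + v2); rewrite mulrDr mulrA; do !split=> //.
by apply: subringD (subringM VS Vc Vv1) Vv2.
Qed.

Lemma valuation_PID_min I : (forall J, is_ideal V J -> principal_ideal V J) ->
  (forall x, I x -> V x) -> (exists x, I x) ->
  exists2 r, I r & forall x, I x -> dvd_in V r x.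
Proof.
move=> hPID IV I0; have [a [Va ha]] := hPID _ (ext_ideal_ideal IV I0).
have [r [v [Ir [Vv ea]]]] : ext_ideal I a by apply/ha/dvd_in_refl.
exists r => // x /ext_ideal_self /ha [c [Vc ->]].
by exists (v * c); rewrite ea mulrA; split=> //; apply: subringM.
Qed.

Lemma noetherian_valuation_PID : noetherian V ->
  forall I, is_ideal V I -> principal_ideal V I.
Proof.
move=> hN I hI; apply: NNPP => nP.
have hnext a : exists b, I a -> I b /\ ~ dvd_in V a b.
  apply: NNPP => hne; apply: nP; exists a.
  have Ia : I a by apply: NNPP => nIa; apply: hne; exists 0 => /nIa.
  split; first exact: ideal_sub hI Ia.
  move=> x; split=> [Ix|[c [Vc ->]]]; last exact: ideal_mulr hI Vc Ia.
  by apply: NNPP => nd; apply: hne; exists x.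
have [f fP] := choice _ hnext.
pose s := fix s n := if n is k.+1 then f (s k) else 0.
have sI n : I (s n) by elim: n => [|n IH]; [apply: ideal0 hI|case: (fP _ IH)].
have hinc n x : dvd_in V (s n) x -> dvd_in V (s n.+1) x.
  move=> [c [Vc ->]]; case: (valuation_dvd_total (s n) (s n.+1)) => [hd|[e [Ve ->]]].
    by case: (fP _ (sI n)).
  by exists (e * c); rewrite mulrA; split=> //; apply: subringM.
have [N hN'] := hN _ (fun n => dvd_in_ideal VS (ideal_sub hI (sI n))) hinc.
by case: (fP _ (sI N)) => _; apply; apply: hN' (leqnSn N) (dvd_in_refl _ VS).
Qed.

Section AlmostUniformizer.
Variable a : L.
Hypotheses (aM : M a) (a0 : a != 0)
  (ha : forall y, M y -> y != 0 -> exists m n w,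
     (0 < m)%N /\ (0 < n)%N /\ unit_in V w /\ y ^+ m = w * a ^+ n).

(* [x ^+ m * a ^+ p2 = w * a ^+ p1] with [w] a unit says that
   [m * v(x) = (p1 - p2) * v(a)]: [q] is the value of [x] in units of the
   value of [a] (two exponents avoid negative powers). *)
Definition avalue x (q : rat) := exists m p1 p2 : nat, (0 < m)%N /\
  q = (p1%:R - p2%:R) / m%:R /\ exists2 w, unit_in V w & x ^+ m * a ^+ p2 = w * a ^+ p1.

Lemma avalue_exists x : x != 0 -> exists q, avalue x q.
Proof.
move=> x0; case: (classic (V x)) => Vx.
  case: (classic (M x)) => Mx.
    have [m [n [w [m0 [n0 [uw e]]]]]] := ha Mx x0.
    exists ((n%:R - 0%:R) / m%:R), m, n, 0%N.
    by do !split=> //; exists w; rewrite // expr0 mulr1.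
  exists 0, 1%N, 0%N, 0%N; rewrite subrr mul0r; do !split=> //; exists x.
    by apply/unit_inE; split=> //; apply: notM_unit.
  by rewrite !expr0 !mulr1 expr1.
have [m [n [w [m0 [n0 [uw e]]]]]] := ha (notV_invM x0 Vx) (invr_neq0 x0).
have [_ _ w0] := proj1 (unit_inE V w) uw.
exists ((0%:R - n%:R) / m%:R), m, 0%N, n; do !split=> //.
exists w^-1; first exact: unit_inV.
have -> : x ^+ m = (w * a ^+ n)^-1 by rewrite -e exprVn invrK.
by rewrite expr0 mulr1; field; rewrite w0 expf_neq0.
Qed.

Lemma avalue_unique x q q' : avalue x q -> avalue x q' -> q = q'.
Proof.
move=> [m [p1 [p2 [m0 [-> [w uw e1]]]]]] [m' [r1 [r2 [m0' [-> [w' uw' e2]]]]]].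
have E : w ^+ m' * a ^+ (p1 * m' + r2 * m) = w' ^+ m * a ^+ (r1 * m + p2 * m').
  transitivity ((x ^+ m * a ^+ p2) ^+ m' * (a ^+ r2) ^+ m).
    by rewrite e1 exprD !exprM exprMn; ring.
  transitivity ((x ^+ m' * a ^+ r2) ^+ m * (a ^+ p2) ^+ m').
    by rewrite !exprMn -!exprM (mulnC m' m); ring.
  by rewrite e2 exprD !exprM exprMn; ring.
have /(congr1 (fun k : nat => k%:R : rat)) := unit_mul_pow_inj aM a0
  (unit_inX _ VS uw) (unit_inX _ VS uw') E.
rewrite !natrD !natrM => hQ.
apply/eqP; rewrite eqr_div ?pnatr_eq0 -?lt0n //; apply/eqP.
apply: (addIr (p2%:R * m'%:R + r2%:R * m%:R)).
transitivity (p1%:R * m'%:R + r2%:R * m%:R : rat); first by ring.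
by rewrite hQ; ring.
Qed.

Lemma avalueM x y q q' : avalue x q -> avalue y q' -> avalue (x * y) (q + q').
Proof.
move=> [m [p1 [p2 [m0 [-> [w uw e1]]]]]] [m' [r1 [r2 [m0' [-> [w' uw' e2]]]]]].
exists (m * m')%N, (p1 * m' + r1 * m)%N, (p2 * m' + r2 * m)%N; rewrite muln_gt0 m0 m0'.
split=> //; split; first by rewrite !natrD !natrM; field; rewrite !pnatr_eq0 -!lt0n m0 m0'.
exists (w ^+ m' * w' ^+ m); first exact: unit_inM VS (unit_inX _ VS uw) (unit_inX _ VS uw').
have -> : (x * y) ^+ (m * m') * a ^+ (p2 * m' + r2 * m) =
    (x ^+ m * a ^+ p2) ^+ m' * (y ^+ m' * a ^+ r2) ^+ m.
  by rewrite !exprMn -!exprM exprD (mulnC m' m); ring.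
rewrite e1 e2 exprD !exprM !exprMn; ring.
Qed.

Lemma avalue_ge0 x q : avalue x q -> (0 <= q <-> V x).
Proof.
move=> [m [p1 [p2 [m0 [-> [w uw e]]]]]]; have [Vw _ w0] := proj1 (unit_inE V w) uw.
rewrite pmulr_lge0 ?invr_gt0 ?ltr0n // subr_ge0 ler_nat.
case: (leqP p2 p1) => h.
  split=> // _; apply: (valuation_root_closed m0).
  have -> : x ^+ m = w * a ^+ (p1 - p2).
    by apply: (mulIf (expf_neq0 p2 a0)); rewrite e -mulrA -exprD subnK.
  exact: subringM VS Vw (subringX _ VS (ideal_sub MI aM)).
split=> // Vx; exfalso; apply: (unit_in_notM uw).
have -> : w = x ^+ m * a ^+ (p2 - p1).
  by apply: (mulIf (expf_neq0 p1 a0)); rewrite -e -mulrA -exprD subnK // ltnW.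
by apply: ideal_mull MI (subringX _ VS Vx) (idealX VS MI aM _); rewrite subn_gt0.
Qed.

Lemma almost_uniformizer_rational : rational_valuation_domain V.
Proof.
split=> //.
have hv x : exists q, x != 0 -> avalue x q.
  by have [->|x0] := eqVneq x 0; [exists 0|have [q hq] := avalue_exists x0; exists q].
have [v vP] := choice _ hv.
exists v; split=> [x y x0 y0|x y x0 y0].
  by apply: avalue_unique (vP _ (mulf_neq0 x0 y0)) (avalueM (vP _ x0) (vP _ y0)).
have yx0 : y / x != 0 by rewrite mulf_neq0 ?invr_eq0.
have -> : v y = v (y / x) + v x.
  by rewrite -{1}(divfK x0 y); apply: avalue_unique (vP _ _) (avalueM (vP _ yx0) (vP _ x0));
    rewrite divfK.
by rewrite lerDr; apply: avalue_ge0; apply: vP.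
Qed.

End AlmostUniformizer.

Lemma rational_valuation_pow_unit y z : rational_valuation_domain V ->
  M y -> y != 0 -> M z -> z != 0 ->
  exists m n, [/\ (0 < m)%N, (0 < n)%N & unit_in V (y ^+ m / z ^+ n)].
Proof.
move=> [_ [v [vM vle]]] My y0 Mz z0.
have v1 : v 1 = 0 by apply: (addrI (v 1)); rewrite -vM ?oner_neq0 // mulr1 addr0.
have vX x n : x != 0 -> v (x ^+ n) = n%:R * v x.
  move=> x0; elim: n => [|n IH]; first by rewrite expr0 v1 mul0r.
  by rewrite exprS vM ?expf_neq0 // IH mulrS mulrDl mul1r.
have vgt0 x : M x -> x != 0 -> 0 < v x.
  move=> Mx x0; rewrite ltNge -v1; apply/negP => /(vle _ _ x0 (oner_neq0 _)).
  by rewrite div1r => Vxi; apply: unit_notM x0 Vxi Mx.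
have [m [n [m0 n0 e]]] := rat_commensurable (vgt0 _ My y0) (vgt0 _ Mz z0).
have evv : v (y ^+ m) = v (z ^+ n) by rewrite !vX.
have ym0 : y ^+ m != 0 by rewrite expf_neq0.
have zn0 : z ^+ n != 0 by rewrite expf_neq0.
exists m, n; split=> //; apply/unit_inE; split.
- by apply/(vle _ _ zn0 ym0); rewrite evv.
- by rewrite invf_div; apply/(vle _ _ ym0 zn0); rewrite evv.
- by rewrite mulf_neq0 ?invr_eq0.
Qed.

Hypothesis hM0 : exists m, M m /\ m != 0.

Lemma valuation_not_field : ~ is_field V.
Proof.
move=> hf; have [m [Mm m0]] := hM0.
exact: unit_in_notM (hf m (ideal_sub MI Mm) m0) Mm.
Qed.

Lemma valuation_PID_DVR : (forall I, is_ideal V I -> principal_ideal V I) -> DVR V.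
Proof.
move=> hPID; split; last by split; [|exact: valuation_not_field].
by split; [exact: PID_noetherian|exact: valuation_quasilocal].
Qed.

Lemma noetherian_valuation_DVR : noetherian V -> DVR V.
Proof. by move=> hN; apply/valuation_PID_DVR/noetherian_valuation_PID. Qed.

End ValuationDomain.

Section Span.
Variables (L : fieldType) (F : L -> Prop).
Hypothesis hF : subfield F.
Implicit Types (s : seq L) (a c x y : L).
Let FS := subfield_subring hF.

Fixpoint fspan s x : Prop :=
  if s is a :: s' then exists c, F c /\ fspan s' (x - c * a) else x = 0.

Lemma fspan0 s : fspan s 0.
Proof.
by elim: s => [|a s IH] //=; exists 0; rewrite mul0r subr0; split=> //; apply: subring0.
Qed.

Lemma fspanD s x y : fspan s x -> fspan s y -> fspan s (x + y).
Proof.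
elim: s x y => [|a s IH] x y /=; first by move=> -> ->; rewrite addr0.
move=> [c1 [F1 h1]] [c2 [F2 h2]]; exists (c1 + c2); split; first exact: subringD.
have -> : x + y - (c1 + c2) * a = (x - c1 * a) + (y - c2 * a) by ring.
exact: IH.
Qed.

Lemma fspanZ s c x : F c -> fspan s x -> fspan s (c * x).
Proof.
move=> Fc; elim: s x => [|a s IH] x /=; first by move=> ->; rewrite mulr0.
move=> [c1 [F1 h1]]; exists (c * c1); split; first exact: subringM.
have -> : c * x - c * c1 * a = c * (x - c1 * a) by ring.
exact: IH.
Qed.

Lemma fspanB s x y : fspan s x -> fspan s y -> fspan s (x - y).
Proof.
move=> hx hy; apply: fspanD hx _; rewrite -mulN1r.
exact: fspanZ (subringN FS (subring1 FS)) hy.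
Qed.

Lemma fspan_cons s a x : fspan s x -> fspan (a :: s) x.
Proof. by exists 0; rewrite mul0r subr0; split=> //; apply: subring0. Qed.

Lemma fspan_head s a : fspan (a :: s) a.
Proof. by exists 1; rewrite mul1r subrr; split; [apply: subring1|apply: fspan0]. Qed.

Lemma fspan_sub K s x : subring K -> (forall y, F y -> K y) ->
  (forall i, (i < size s)%N -> K s`_i) -> fspan s x -> K x.
Proof.
move=> hK FK; elim: s x => [|a s IH] x hs /=; first by move=> ->; apply: subring0.
move=> [c [Fc h]]; rewrite -(subrK (c * a) x).
apply: subringD hK (IH _ (fun i => hs i.+1) h) (subringM hK (FK _ Fc) (hs 0%N _)) => //.
Qed.

Lemma fspan_sumP s x : fspan s x <-> exists c : seq L, size c = size s /\
  (forall i, (i < size c)%N -> F c`_i) /\ x = \sum_(i < size s) c`_i * s`_i.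
Proof.
elim: s x => [|a s IH] x /=.
  by split=> [->|[c [_ [_ ->]]]]; [exists [::]; rewrite big_ord0|rewrite big_ord0].
split=> [[c0 [F0 /IH [c [sc [Fc e]]]]]|[[|c0 c] [//= [sc] [Fc ->]]]].
  exists (c0 :: c); split; first by rewrite /= sc.
  split; first by case=> [|i] //= hi; apply: Fc.
  by rewrite big_ord_recl /= -e; ring.
exists c0; split; first exact: (Fc 0%N).
rewrite big_ord_recl /= addrAC subrr add0r; apply/IH; exists c.
by split=> //; split=> // i; apply: (Fc i.+1).
Qed.

Lemma finite_degreeP K : finite_degree F K <->
  exists s, (forall i, (i < size s)%N -> K s`_i) /\ (forall x, K x -> fspan s x).
Proof.
split=> [[s [sK hs]]|[s [sK hs]]]; exists s; split=> // x Kx; last exact/fspan_sumP/hs.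
exact/fspan_sumP/hs.
Qed.

Definition subspace (W : L -> Prop) : Prop :=
  W 0 /\ (forall x y, W x -> W y -> W (x + y)) /\ (forall c x, F c -> W x -> W (c * x)).

Lemma subspaceI_fspan s W : subspace W -> subspace (fun x => W x /\ fspan s x).
Proof.
move=> [W0 [WD WZ]]; split; first by split=> //; apply: fspan0.
split; first by move=> x y [Wx sx] [Wy sy]; split; [apply: WD|apply: fspanD].
by move=> c x Fc [Wx sx]; split; [apply: WZ|apply: fspanZ].
Qed.

Lemma fspan_chain_stable s (W : nat -> L -> Prop) : (forall j, subspace (W j)) ->
  (forall j x, W j x -> W j.+1 x) -> (forall j x, W j x -> fspan s x) ->
  exists N, forall j x, (N <= j)%N -> W j x -> W N x.
Proof.
elim: s W => [|a s IH] W hW hinc hs.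
  by exists 0%N => j x _ /(hs j) /= ->; case: (hW 0%N).
have mono := chain_mono hinc.
(* The traces of [W j] on [span s] stabilise by induction; beyond that,
   [W j] can only grow in the direction of [a]. *)
have [N1 hN1] : exists N1, forall j x, (N1 <= j)%N ->
    W j x /\ fspan s x -> W N1 x /\ fspan s x.
  apply: IH => [j|j x [Wx sx]|j x []] //; last by split=> //; apply: hinc.
  exact: subspaceI_fspan.
(* [N2] is a stage at which [W] meets [a + span s], if some stage does. *)
have [N2 hN2] : exists N2, forall j, (exists2 z, W j z & fspan s (z - a)) ->
    exists2 z, W N2 z & fspan s (z - a).
  case: (classic (exists j z, W j z /\ fspan s (z - a))) => [[j [z [Wz sz]]]|nP].
    by exists j => _ _; exists z.
  by exists 0%N => j [z Wz sz]; case: nP; exists j, z.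
exists (N1 + N2)%N => j x hj Wx; have [WN0 [WND WNZ]] := hW (N1 + N2)%N.
have le1 : (N1 <= j)%N by apply: leq_trans hj; apply: leq_addr.
have [c [Fc sx]] := hs j x Wx; have [W0 [WD WZ]] := hW j.
have [c00|c0] := eqVneq c 0.
  move: sx; rewrite c00 mul0r subr0 => sx.
  exact: mono (leq_addr _ _) (hN1 j x le1 (conj Wx sx)).1.
have Fci : F c^-1 := subfieldV hF Fc c0.
have sy : fspan s (c^-1 * x - a).
  have -> : c^-1 * x - a = c^-1 * (x - c * a) by field.
  exact: fspanZ.
have [z Wz sz] : exists2 z, W N2 z & fspan s (z - a).
  by apply: (hN2 j); exists (c^-1 * x); first exact: WZ.
have Wzj : W j z by apply: mono Wz; apply: leq_trans hj; apply: leq_addl.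
have [Wy _] : W N1 (c^-1 * x - z) /\ fspan s (c^-1 * x - z).
  apply: (hN1 j _ le1); split.
    apply: WD (WZ _ _ Fci Wx) _; rewrite -mulN1r.
    exact: WZ (subringN FS (subring1 FS)) Wzj.
  have -> : c^-1 * x - z = (c^-1 * x - a) - (z - a) by ring.
  exact: fspanB sy sz.
have -> : x = c * ((c^-1 * x - z) + z) by field.
apply: WNZ Fc (WND _ _ _ _); first exact: mono (leq_addr _ _) Wy.
exact: mono (leq_addl _ _) Wz.
Qed.

End Span.

Section DplusM.
Variables (L : fieldType) (V M K D : L -> Prop).
Hypotheses (hV : valuation_domain V) (hM : maximal_ideal V M)
  (hM0 : exists m, M m /\ m != 0)
  (hK : subfield K) (hKV : forall x, K x -> V x)
  (hVKM : forall v, V v -> exists k m, K k /\ M m /\ v = k + m)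
  (hD : subring D) (hDK : forall x, D x -> K x).
Implicit Types (I J : L -> Prop) (a b c d k l r u v w x y : L).

Local Notation R := (dplusm D M).
Local Notation F := (frac_field D).

Let VS := valuation_subring hV.
Let MI := maximal_ideal_ideal hM.
Let M1 := maximal_ideal_proper hM.
Let KS := subfield_subring hK.

Lemma K_unit k : K k -> k != 0 -> unit_in V k.
Proof. by move=> Kk k0; apply/unit_inE; split=> //; apply: hKV; [|apply: subfieldV]. Qed.

Lemma K_notM k : K k -> k != 0 -> ~ M k.
Proof. by move=> Kk k0; exact: (unit_in_notM hM (K_unit Kk k0)). Qed.

Lemma residue_exists v : V v -> exists2 k, K k & M (v - k).
Proof. by move=> /hVKM [k [m [Kk [Mm ->]]]]; exists k; rewrite // addrC addKr. Qed.

Lemma residue_unique x k l : K k -> K l -> M (x - k) -> M (x - l) -> k = l.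
Proof.
move=> Kk Kl Mk Ml; apply/eqP; rewrite -subr_eq0; apply/negPn/negP => kl0.
apply: (K_notM (subringB KS Kk Kl) kl0).
have -> : k - l = (x - l) - (x - k) by ring.
exact: idealB VS MI Ml Mk.
Qed.

Lemma dplusmP x : R x <-> exists2 d, D d & M (x - d).
Proof.
split=> [[d [m [Dd [Mm ->]]]]|[d Dd Mxd]]; first by exists d; rewrite // addrC addKr.
by exists d, (x - d); do !split=> //; rewrite addrC subrK.
Qed.

Lemma D_dplusm x : D x -> R x.
Proof. by move=> Dx; apply/dplusmP; exists x; rewrite // subrr; apply: ideal0 MI. Qed.

Lemma M_dplusm x : M x -> R x.
Proof. by move=> Mx; apply/dplusmP; exists 0; rewrite ?subr0 //; apply: subring0 hD. Qed.

Lemma dplusm_V x : R x -> V x.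
Proof.
by move=> [d [m [Dd [Mm ->]]]]; apply: subringD VS (hKV (hDK Dd)) (ideal_sub MI Mm).
Qed.

Lemma dplusm_subring : subring R.
Proof.
split; first exact: D_dplusm (subring0 hD).
split; first exact: D_dplusm (subring1 hD).
split.
  move=> x y /dplusmP[d Dd Mx] /dplusmP[e De My]; apply/dplusmP; exists (d + e).
    exact: subringD.
  have -> : x + y - (d + e) = (x - d) + (y - e) by ring.
  exact: idealD MI Mx My.
split.
  move=> x /dplusmP[d Dd Mx]; apply/dplusmP; exists (- d); first exact: subringN.
  have -> : - x - - d = - (x - d) by ring.
  exact: idealN VS MI Mx.
move=> x y Rx /dplusmP[e De My]; have /dplusmP[d Dd Mx] := Rx.
apply/dplusmP; exists (d * e); first exact: subringM.
exact: ideal_mulB VS MI (dplusm_V Rx) (hKV (hDK De)) Mx My.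
Qed.

Let RS := dplusm_subring.

Lemma dplusm_K x : R x -> K x -> D x.
Proof.
move=> /dplusmP[d Dd Mxd] Kx; rewrite (residue_unique Kx (hDK Dd) _ Mxd) //.
by rewrite subrr; apply: ideal0 MI.
Qed.

Lemma dplusm_exp w k n : V w -> K k -> M (w - k) -> D (k ^+ n) -> R (w ^+ n).
Proof.
move=> Vw Kk Mwk Dkn; apply/dplusmP; exists (k ^+ n) => //.
exact: ideal_expB VS MI Vw (hKV Kk) Mwk.
Qed.

Lemma V_ideal_dplusm_ideal I : is_ideal V I -> (forall x, I x -> M x) -> is_ideal R I.
Proof.
move=> hI IM; split; first by move=> x /IM /M_dplusm.
split; first exact: ideal0 hI.
split; first by move=> x y; apply: idealD hI.
by move=> r x /dplusm_V Vr; apply: ideal_mull hI Vr.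
Qed.

Lemma M_dplusm_ideal : is_ideal R M.
Proof. exact: V_ideal_dplusm_ideal MI (fun x Mx => Mx). Qed.

Lemma dplusm_scaled_ideal m0 (X : L -> Prop) : M m0 -> (forall x, X x -> V x) -> X 0 ->
  (forall x y, X x -> X y -> X (x + y)) -> (forall r x, R r -> X x -> X (r * x)) ->
  is_ideal R (fun x => exists2 y, X y & x = m0 * y).
Proof.
move=> Mm0 XV X0 XD XM.
split; first by move=> _ [y Xy ->]; apply: M_dplusm; apply: ideal_mulr MI (XV _ Xy) Mm0.
split; first by exists 0; rewrite ?mulr0.
split; first by move=> _ _ [y Xy ->] [z Xz ->]; exists (y + z); rewrite ?mulrDr //; apply: XD.
by move=> r _ Rr [y Xy ->]; exists (r * y); [apply: XM|rewrite mulrCA].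
Qed.

Lemma dplusm_unit_V u : unit_in R u -> unit_in V u.
Proof. exact: unit_in_sub dplusm_V. Qed.

Lemma dplusm_unit_notM u : unit_in R u -> ~ M u.
Proof. exact: unit_not_ideal M_dplusm_ideal M1. Qed.

Lemma dplusm_notM_unit x : subfield D -> R x -> ~ M x -> unit_in R x.
Proof.
move=> hDf Rx nMx; have /dplusmP[d Dd Mxd] := Rx.
have Vxi := notM_unit hV hM (dplusm_V Rx) nMx.
have x0 : x != 0 by apply/eqP => x0; apply: nMx; rewrite x0; apply: ideal0 MI.
have d0 : d != 0 by apply/eqP => d0; apply: nMx; move: Mxd; rewrite d0 subr0.
have [k Kk Mxik] := residue_exists Vxi.
have dk : d * k = 1.
  apply: (@residue_unique 1) (subringM KS (hDK Dd) Kk) (subring1 KS) _ _.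
    by rewrite -{1}(divff x0); apply: ideal_mulB VS MI (dplusm_V Rx) (hKV Kk) Mxd Mxik.
  by rewrite subrr; apply: ideal0 MI.
apply/unit_inE; split=> //; apply/dplusmP; exists k => //.
by rewrite -(mulKf d0 k) dk mulr1; apply: subfieldV hDf Dd d0.
Qed.

Lemma dplusm_ideal_subM J : subfield D -> is_ideal R J -> ~ J 1 -> forall x, J x -> M x.
Proof.
move=> hDf hJ nJ1 x Jx; apply: NNPP => nMx.
exact: unit_not_ideal hJ nJ1 (dplusm_notM_unit hDf (ideal_sub hJ Jx) nMx) Jx.
Qed.

Lemma dplusm_quasilocal : subfield D -> quasilocal R.
Proof.
move=> hDf; have hMR : maximal_ideal R M.
  by split; [exact: M_dplusm_ideal|split=> // J hJ nJ1 _; apply: dplusm_ideal_subM].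
exists M; split=> // N [hN [nN1 Nmax]] x; split; first exact: dplusm_ideal_subM.
exact: Nmax M_dplusm_ideal M1 (dplusm_ideal_subM hDf hN nN1) x.
Qed.

Lemma dplusm_unit_pow w : subfield D -> root_ext F K -> unit_in V w ->
  exists2 p, (0 < p)%N & unit_in R (w ^+ p).
Proof.
move=> hDf hr uw; have [Vw _ _] := proj1 (unit_inE V w) uw.
have [k Kk Mwk] := residue_exists Vw; have [p [p_gt0 Fkp]] := hr k Kk.
have Rwp := dplusm_exp Vw Kk Mwk (subfield_frac_field hD hDf Fkp).
exists p => //; apply: dplusm_notM_unit hDf Rwp _.
exact: (unit_in_notM hM (unit_inX p VS uw)).
Qed.

Lemma noetherian_dplusm_V : noetherian R -> noetherian V.
Proof.
move=> hN I hI hinc; have [m0 [Mm0 m00]] := hM0.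
pose J n x := exists2 y, I n y & x = m0 * y.
have hJ n : is_ideal R (J n).
  apply: dplusm_scaled_ideal Mm0 (fun x => ideal_sub (hI n)) (ideal0 (hI n)) _ _.
    by move=> x y; apply: idealD (hI n).
  by move=> r x /dplusm_V Vr; apply: ideal_mull (hI n) Vr.
have [N hN'] : exists N, forall n x, (N <= n)%N -> J n x -> J N x.
  by apply: hN hJ _ => n _ [y Iy ->]; exists y => //; apply: hinc.
exists N => n x le Inx.
by have [y Iy /(mulfI m00) ->] := hN' n (m0 * x) le (ex_intro2 _ _ x Inx erefl).
Qed.

Lemma noetherian_dplusm_subfield : noetherian R -> subfield D.
Proof.
move=> hN; split=> // d Dd d0; have [m0 [Mm0 m00]] := hM0.
have Kdi := subfieldV hK (hDK Dd) d0.
pose e n := d ^- n * m0.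
have Re n : R (e n).
  by apply: M_dplusm; apply: ideal_mull MI _ Mm0; rewrite -exprVn; apply: subringX (hKV Kdi).
have ee n : e n = e n.+1 * d by rewrite /e exprSr invfM; field; rewrite d0 expf_neq0.
have hinc n x : dvd_in R (e n) x -> dvd_in R (e n.+1) x.
  move=> [r [Rr ->]]; exists (d * r); rewrite mulrA -ee; split=> //.
  exact: subringM RS (D_dplusm Dd) Rr.
have [N hN'] := hN _ (fun n => dvd_in_ideal RS (Re n)) hinc.
have [r [Rr er]] := hN' N.+1 _ (leqnSn N) (dvd_in_refl _ RS).
have rd : r = d^-1.
  apply: (mulfI (_ : e N != 0)); first by rewrite mulf_neq0 ?invr_eq0 ?expf_neq0.
  by rewrite -er [e N]ee -mulrA divff ?mulr1.
by rewrite -rd; apply: (dplusm_K Rr); rewrite rd.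
Qed.

Lemma dplusm_span_ideal m0 s : M m0 -> (forall i, (i < size s)%N -> K s`_i) ->
  is_ideal R (fun x => exists2 y,
    (exists w m, fspan F s w /\ M m /\ y = w + m) & x = m0 * y).
Proof.
move=> Mm0 sK; have hF := frac_field_subfield hD.
have Vsp w : fspan F s w -> V w.
  by move=> sw; apply: hKV; exact: (fspan_sub KS (frac_field_min hK hDK) sK sw).
apply: dplusm_scaled_ideal Mm0 _ _ _ _.
- by move=> _ [w [m [sw [Mm ->]]]]; apply: subringD VS (Vsp _ sw) (ideal_sub MI Mm).
- by exists 0, 0; rewrite addr0; split; [apply: fspan0|split=> //; apply: ideal0 MI].
- move=> _ _ [w [m [sw [Mm ->]]]] [w' [m' [sw' [Mm' ->]]]].
  exists (w + w'), (m + m'); split; first exact: (fspanD hF sw sw').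
  by split; [apply: idealD MI Mm Mm'|ring].
move=> r _ /dplusmP[d Dd Mrd] [w [m [sw [Mm ->]]]].
have Rr : R r by apply/dplusmP; exists d.
exists (d * w), ((r - d) * w + r * m); split.
  exact: (fspanZ hF (frac_field_id hD Dd) sw).
split; last by ring.
exact: idealD MI (ideal_mulr MI (Vsp _ sw) Mrd) (ideal_mull MI (dplusm_V Rr) Mm).
Qed.

Lemma noetherian_dplusm_finite : noetherian R -> finite_degree F K.
Proof.
move=> hN; have hF := frac_field_subfield hD; have FK := frac_field_min hK hDK.
apply/(finite_degreeP F K); apply: NNPP => nfin; have [m0 [Mm0 m00]] := hM0.
have hnext s : exists k, (forall i, (i < size s)%N -> K s`_i) -> K k /\ ~ fspan F s k.
  apply: NNPP => hne; apply: nfin; exists s.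
  have sK : forall i, (i < size s)%N -> K s`_i.
    by apply: NNPP => nsK; apply: hne; exists 0 => /nsK.
  split=> // x Kx; apply: NNPP => nsx; apply: hne; exists x => _.
  by split.
have [g gP] := choice _ hnext.
pose t := fix t n := if n is k.+1 then g (t k) :: t k else [::].
have tK n i : (i < size (t n))%N -> K (t n)`_i.
  elim: n i => [|n IH] [|i] //= hi; [by case: (gP _ IH)|exact: IH].
pose X n x := exists w m, fspan F (t n) w /\ M m /\ x = w + m.
have hX n := dplusm_span_ideal Mm0 (tK n).
have hinc n x : (exists2 y, X n y & x = m0 * y) -> exists2 y, X n.+1 y & x = m0 * y.
  move=> [_ [w [m [sw [Mm ->]]]] ->]; exists (w + m) => //.
  by exists w, m; split; first exact: (fspan_cons hF _ sw).
have [N hN'] := hN _ hX hinc.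
have [Kg ng] := gP _ (tK N).
have [_ [w [m [sw [Mm ->]]]] /(mulfI m00) eg] : exists2 y, X N y & m0 * g (t N) = m0 * y.
  apply: hN' (leqnSn N) _; exists (g (t N)) => //; exists (g (t N)), 0.
  by rewrite addr0; split; [exact: (fspan_head hF (t N) (g (t N)))|split=> //; apply: ideal0 MI].
apply: ng; suff -> : g (t N) = w by [].
apply: (@residue_unique (g (t N))) Kg (fspan_sub KS FK (tK N) sw) _ _.
  by rewrite subrr; apply: ideal0 MI.
by rewrite eg addrC addKr.
Qed.

Lemma dplusm_noetherian : DVR V -> subfield D -> finite_degree F K -> noetherian R.
Proof.
move=> [_ [hPID _]] hDf; have hF := frac_field_subfield hD.
move=> /(finite_degreeP F K) [s [sK Ks]] I hI hinc; have mono := chain_mono hinc.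
have [r0 [N0 Ir0] r0dvd] := valuation_PID_min hV (I := fun x => exists n, I n x) hPID
  (fun x '(ex_intro n Ix) => dplusm_V (ideal_sub (hI n) Ix))
  (ex_intro _ 0 (ex_intro _ 0%N (ideal0 (hI 0%N)))).
have r0M n m : (N0 <= n)%N -> M m -> I n (r0 * m).
  by move=> le Mm; apply: ideal_mulr (hI n) (M_dplusm Mm) (mono _ _ _ le Ir0).
pose W j k := K k /\ I (N0 + j)%N (r0 * k).
have hW j : subspace F (W j).
  split; first by split; [apply: subring0 KS|rewrite mulr0; apply: ideal0 (hI _)].
  split; first by move=> x y [Kx Ix] [Ky Iy]; split;
    [apply: subringD|rewrite mulrDr; apply: idealD (hI _) Ix Iy].
  move=> c x Fc [Kx Ix]; split; first exact: subringM KS (frac_field_min hK hDK Fc) Kx.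
  by rewrite mulrCA; apply: ideal_mull (hI _) (D_dplusm (subfield_frac_field hD hDf Fc)) Ix.
have hWinc j x : W j x -> W j.+1 x by move=> [Kx Ix]; split=> //; rewrite addnS; apply: hinc.
have [N1 hN1] := fspan_chain_stable hF hW hWinc (fun j x Wx => Ks x Wx.1).
exists (N0 + N1)%N => n y le Iy; have le0 : (N0 <= n)%N := leq_trans (leq_addr N1 N0) le.
have [w [Vw ey]] := r0dvd y (ex_intro _ n Iy); have [k Kk Mwk] := residue_exists Vw.
have Wk : W (n - N0)%N k.
  split=> //; rewrite subnKC //.
  have -> : r0 * k = y - r0 * (w - k) by rewrite ey; ring.
  exact: idealB RS (hI n) Iy (r0M _ _ le0 Mwk).
have le1 : (N1 <= n - N0)%N by rewrite leq_subRL.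
have [_ Ik] := hN1 _ _ le1 Wk.
rewrite ey -(subrK k w) mulrDr.
exact: idealD (hI _) (r0M _ _ (leq_addr _ _) Mwk) Ik.
Qed.

Lemma dplusm_dvd_pow a b : subfield D -> root_ext F K -> a != 0 -> V (b / a) ->
  exists n, (0 < n)%N /\ dvd_in R (a ^+ n) (b ^+ n).
Proof.
move=> hDf hr a0 Vba; have [k Kk Mk] := residue_exists Vba.
have [n [n0 Fkn]] := hr k Kk.
exists n; split=> //; exists ((b / a) ^+ n); split; last by rewrite -exprMn mulrC divfK.
exact: dplusm_exp Vba Kk Mk (subfield_frac_field hD hDf Fkn).
Qed.

Lemma dplusm_AV : subfield D -> root_ext F K -> AV_domain R.
Proof.
move=> hDf hr a b _ _ a0 b0.
have [Vba|Vab] : V (b / a) \/ V (a / b).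
  by case: hV => _ /(_ (b / a)); rewrite mulf_neq0 ?invr_eq0 // invf_div; apply.
- by have [n [n0 h]] := dplusm_dvd_pow hDf hr a0 Vba; exists n; split=> //; left.
- by have [n [n0 h]] := dplusm_dvd_pow hDf hr b0 Vab; exists n; split=> //; right.
Qed.

Lemma AV_dplusm_root : AV_domain R -> subfield D -> root_ext F K.
Proof.
move=> hAV hDf k Kk; have [m0 [Mm0 m00]] := hM0.
have [->|k0] := eqVneq k 0.
  by exists 1%N; rewrite expr1; split=> //; exact: (frac_field_id hD (subring0 hD)).
have Rkm : R (k * m0) := M_dplusm (ideal_mull MI (hKV Kk) Mm0).
have [n [n0 hdvd]] := hAV _ _ Rkm (M_dplusm Mm0) (mulf_neq0 k0 m00) m00.
exists n; split=> //; apply: (frac_field_id hD).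
have Kkn := subringX n KS Kk; have kn0 := expf_neq0 n k0.
case: hdvd => [[c [Rc e]]|[c [Rc e]]].
  have ec : c = (k ^+ n)^-1.
    apply: (mulfI (expf_neq0 n (mulf_neq0 k0 m00))).
    by rewrite -e exprMn; field; rewrite kn0.
  rewrite -[k ^+ n]invrK -ec; apply: subfieldV hDf _ _; last by rewrite ec invr_eq0.
  by apply: (dplusm_K Rc); rewrite ec; apply: subfieldV hK Kkn kn0.
have ec : c = k ^+ n by apply: (mulfI (expf_neq0 n m00)); rewrite -e exprMn mulrC.
by rewrite -ec; apply: (dplusm_K Rc); rewrite ec.
Qed.

Lemma dplusm_API : DVR V -> subfield D -> bounded_root_ext F K -> API_domain R.
Proof.
move=> [_ [hPID _]] hDf [N [N0 hN]] S hS S0.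
have [s0 Ss0 s0dvd] := valuation_PID_min hV hPID (fun x Sx => dplusm_V (hS x Sx).1) S0.
exists N; split=> //.
apply: (ideal_gen_principal RS (subringX N RS (hS _ Ss0).1)); first by exists s0.
move=> _ [s [Ss ->]]; have [w [Vw ->]] := s0dvd s Ss; have [k Kk Mwk] := residue_exists Vw.
exists (w ^+ N); rewrite exprMn; split=> //.
exact: dplusm_exp Vw Kk Mwk (subfield_frac_field hD hDf (hN k Kk)).
Qed.

Lemma API_dplusm_subfield : API_domain R -> subfield D.
Proof.
move=> hAPI; split=> // d Dd d0; have [m0 [Mm0 m00]] := hM0.
have Kdi := subfieldV hK (hDK Dd) d0.
pose e j := d ^- j * m0.
have e0 j : e j != 0 by rewrite mulf_neq0 ?invr_eq0 ?expf_neq0.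
have ee j : e j = e j.+1 * d by rewrite /e exprSr invfM; field; rewrite d0 expf_neq0.
have Re j : R (e j).
  by apply: M_dplusm; apply: ideal_mull MI _ Mm0; rewrite -exprVn; apply: subringX (hKV Kdi).
have hS y : (exists j, y = e j) -> R y /\ y != 0 by move=> [j ->].
have [n [n0 hprinc]] := hAPI _ hS (ex_intro _ _ (ex_intro _ 0%N erefl)).
have [g gmin gdvd] := ideal_gen_principalP RS hprinc.
have hinc j x : dvd_in R (e j ^+ n) x -> dvd_in R (e j.+1 ^+ n) x.
  move=> [r [Rr ->]]; exists (d ^+ n * r); rewrite mulrA -exprMn -ee; split=> //.
  exact: subringM RS (subringX n RS (D_dplusm Dd)) Rr.
have [j [r [Rr eg]]] : exists j, dvd_in R (e j ^+ n) g.
  apply: (gmin (fun x => exists j, dvd_in R (e j ^+ n) x)).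
    exact: chain_union_ideal (fun j => dvd_in_ideal RS (subringX n RS (Re j))) hinc.
  by move=> _ [_ [[j ->] ->]]; exists j; apply: dvd_in_refl.
have [c [Rc ec]] := gdvd (e j.+1 ^+ n) (ex_intro _ _ (conj (ex_intro _ j.+1 erefl) erefl)).
have erc : d^-1 ^+ n = r * c.
  apply: (mulfI (expf_neq0 n (e0 j))); rewrite mulrA -eg -ec -exprMn [e j]ee.
  by rewrite -mulrA divff ?mulr1.
have Ddn : D (d^-1 ^+ n).
  rewrite erc; apply: (dplusm_K (subringM RS Rr Rc)).
  by rewrite -erc; apply: subringX n KS Kdi.
have -> : d^-1 = d ^+ n.-1 * d^-1 ^+ n.
  by rewrite exprVn -{2}(prednK n0) exprS; field; rewrite d0 expf_neq0.
exact: subringM hD (subringX _ hD Dd) Ddn.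
Qed.

Lemma ext_ideal_dplusm_ideal X : (forall x, X x -> M x) -> (exists x, X x) ->
  is_ideal R (ext_ideal V X).
Proof.
move=> XM X0; apply: V_ideal_dplusm_ideal.
  exact: (ext_ideal_ideal hV (fun x Xx => ideal_sub MI (XM x Xx)) X0).
by move=> _ [r [v [Xr [Vv ->]]]]; apply: ideal_mulr MI Vv (XM r Xr).
Qed.

Lemma API_dplusm_bounded : API_domain R -> subfield D -> bounded_root_ext F K.
Proof.
move=> hAPI hDf; have [m0 [Mm0 m00]] := hM0.
pose S y := exists2 k, K k /\ k != 0 & y = k * m0.
have hS y : S y -> R y /\ y != 0.
  move=> [k [Kk k0] ->]; rewrite mulf_neq0 //; split=> //.
  by apply: M_dplusm; apply: ideal_mull MI (hKV Kk) Mm0.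
have S1 : S m0 by exists 1; rewrite ?mul1r //; split; [apply: subring1 KS|apply: oner_neq0].
have [n [n0 hprinc]] := hAPI S hS (ex_intro _ _ S1).
have [g gmin gdvd] := ideal_gen_principalP RS hprinc.
have hT : is_ideal R (ext_ideal V (fun x => x = m0 ^+ n)).
  by apply: ext_ideal_dplusm_ideal => [_ ->|]; [exact: idealX VS MI Mm0 n0|exists (m0 ^+ n)].
have gT : ext_ideal V (fun x => x = m0 ^+ n) g.
  apply: gmin hT _ => _ [_ [[k [Kk _] ->] ->]]; exists (m0 ^+ n), (k ^+ n).
  by rewrite exprMn mulrC; do !split=> //; apply: subringX n VS (hKV Kk).
have [_ [v [-> [Vv eg]]]] := gT.
have [c Kc Mvc] := residue_exists Vv.
have hkn k : K k -> k != 0 -> exists2 d, D d & k ^+ n = c * d.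
  move=> Kk k0; have Skm : S (k * m0) by exists k.
  have [r [Rr er]] := gdvd _ (ex_intro _ _ (conj Skm erefl)).
  have ek : k ^+ n = v * r.
    by apply: (mulfI (expf_neq0 n m00)); rewrite mulrA -eg -er exprMn mulrC.
  have /dplusmP[d Dd Mrd] := Rr; exists d => //.
  apply: (@residue_unique (k ^+ n)) (subringX n KS Kk) (subringM KS Kc (hDK Dd)) _ _.
    by rewrite subrr; apply: ideal0 MI.
  by rewrite ek; apply: ideal_mulB VS MI Vv (hKV (hDK Dd)) Mvc Mrd.
have [d1 Dd1 e1] := hkn 1 (subring1 KS) (oner_neq0 _).
have d10 : d1 != 0 by apply: contra_eq_neq e1 => ->; rewrite mulr0 expr1n oner_neq0.
have ec : c = d1^-1 by rewrite -(mulfK d10 c) -e1 expr1n mul1r.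
have Dc : D c by rewrite ec; apply: subfieldV hDf Dd1 d10.
exists n; split=> // k Kk; have [->|k0] := eqVneq k 0.
  by rewrite expr0n gtn_eqF //; exact: (frac_field_id hD (subring0 hD)).
by have [d Dd ->] := hkn k Kk k0; exact: (frac_field_id hD (subringM hD Dc Dd)).
Qed.

Lemma API_dplusm_DVR : API_domain R -> DVR V.
Proof.
move=> hAPI; apply: (valuation_PID_DVR hV hM hM0) => I hI; have [m0 [Mm0 m00]] := hM0.
case: (classic (exists y, I y /\ y != 0)) => [[x0 [Ix0 x00]]|nz]; last first.
  exists 0; split=> [|x]; first exact: subring0 VS.
  split=> [Ix|[c [_ ->]]]; last by rewrite mul0r; apply: ideal0 hI.
  exists 0; rewrite mulr0; split; first exact: subring0 VS.
  by apply: NNPP => /eqP x0; apply: nz; exists x.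
pose S y := exists2 x, I x /\ x != 0 & y = m0 * x.
have hS y : S y -> R y /\ y != 0.
  move=> [x [Ix xn0] ->]; rewrite mulf_neq0 //; split=> //.
  by apply: M_dplusm; apply: ideal_mulr MI (ideal_sub hI Ix) Mm0.
have Sx0 : S (m0 * x0) by exists x0.
have [n [n0 hprinc]] := hAPI S hS (ex_intro _ _ Sx0).
have [g gmin gdvd] := ideal_gen_principalP RS hprinc.
have hT : is_ideal R (ext_ideal V (fun y => exists s, S s /\ y = s ^+ n)).
  apply: ext_ideal_dplusm_ideal => [_ [_ [[x [Ix _] ->] ->]]|].
    exact: idealX VS MI (ideal_mulr MI (ideal_sub hI Ix) Mm0) n0.
  by exists ((m0 * x0) ^+ n), (m0 * x0).
have [_ [v0 [[_ [[y0 [Iy0 y00] ->] ->]] [Vv0 eg]]]] := gmin _ hT (fun y Ty => ext_ideal_self hV Ty).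
exists y0; split; first exact: ideal_sub hI Iy0.
move=> x; split=> [Ix|[c [Vc ->]]]; last exact: ideal_mulr hI Vc Iy0.
have [->|x0'] := eqVneq x 0; first by exists 0; rewrite mulr0; split=> //; apply: subring0 VS.
have Smx : S (m0 * x) by exists x.
have [c [Rc ec]] := gdvd ((m0 * x) ^+ n) (ex_intro _ _ (conj Smx erefl)).
exists (x / y0); split; last by rewrite mulrC divfK.
apply: (valuation_root_closed hV hM n0).
have -> : (x / y0) ^+ n = v0 * c.
  apply: (mulfI (expf_neq0 n (mulf_neq0 m00 y00))); rewrite mulrA -eg -ec -exprMn.
  by congr (_ ^+ _); field; exact: y00.
exact: subringM VS Vv0 (dplusm_V Rc).
Qed.

Lemma RAV_dplusm_param : RAV_domain R -> exists a, [/\ almost_unif_param R a, M a & a != 0].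
Proof.
move=> [_ [a [Ra ha]]]; have [m0 [Mm0 m00]] := hM0; exists a.
have [m [n [u [m_gt0 [n_gt0 [uu e]]]]]] :=
  ha m0 (M_dplusm Mm0) m00 (fun um => dplusm_unit_notM um Mm0).
have a0 : a != 0.
  by apply: contra_eq_neq e => ->; rewrite expr0n gtn_eqF // mulr0 expf_neq0.
split=> //; apply: NNPP => naM.
have ua : unit_in V a.
  by apply/unit_inE; split=> //; [exact: dplusm_V|exact: (notM_unit hV hM (dplusm_V Ra) naM)].
apply: (unit_in_notM hM (_ : unit_in V (m0 ^+ m))) (idealX VS MI Mm0 m_gt0).
by rewrite e; apply: unit_inM VS (dplusm_unit_V uu) (unit_inX n VS ua).
Qed.

Lemma RAV_dplusm_subfield a : almost_unif_param R a -> M a -> subfield D.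
Proof.
move=> [_ ha] Ma; split=> // d Dd d0.
case: (classic (unit_in R d)) => [/unit_inE[_ Rdi _]|nu].
  exact: (dplusm_K Rdi (subfieldV hK (hDK Dd) d0)).
have [m [n [u [_ [n_gt0 [uu e]]]]]] := ha d (D_dplusm Dd) d0 nu.
have Mdm : M (d ^+ m) by rewrite e; apply: ideal_mull MI (dplusm_V uu.1) (idealX VS MI Ma n_gt0).
by case: (K_notM (subringX m KS (hDK Dd)) (expf_neq0 m d0) Mdm).
Qed.

Lemma RAV_dplusm_root a : almost_unif_param R a -> M a -> root_ext F K.
Proof.
move=> [_ ha] Ma k Kk; have [m0 [Mm0 m00]] := hM0.
have [->|k0] := eqVneq k 0.
  by exists 1%N; rewrite expr1; split=> //; exact: (frac_field_id hD (subring0 hD)).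
have nuM y : M y -> ~ unit_in R y by move=> My /dplusm_unit_notM.
have Mkm : M (k * m0) := ideal_mull MI (hKV Kk) Mm0.
have [m [n [u [m_gt0 [n_gt0 [uu eu]]]]]] :=
  ha _ (M_dplusm Mkm) (mulf_neq0 k0 m00) (nuM _ Mkm).
have [m' [n' [u' [m'_gt0 [n'_gt0 [uu' eu']]]]]] := ha _ (M_dplusm Mm0) m00 (nuM _ Mm0).
have [_ _ u'0] := proj1 (unit_inE R u') uu'.
pose w := u ^+ n' / u' ^+ n.
have uw : unit_in R w := unit_inM RS (unit_inX n' RS uu) (unit_inV (unit_inX n RS uu')).
(* both sides equal [u ^+ n' * a ^+ (n * n')] *)
have E : k ^+ (m * n') * m0 ^+ (m * n') = w * m0 ^+ (m' * n).
  rewrite -exprMn exprM eu [m0 ^+ _]exprM eu' !exprMn -!exprM (mulnC n' n) /w.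
  by field; rewrite expf_neq0.
have ukp : unit_in V (k ^+ (m * n')) := unit_inX _ VS (K_unit Kk k0).
have emn := unit_mul_pow_inj hV hM Mm0 m00 ukp (dplusm_unit_V uw) E.
have ek : k ^+ (m * n') = w by apply: (mulIf (expf_neq0 (m * n') m00)); rewrite E emn.
exists (m * n')%N; rewrite muln_gt0 m_gt0; split=> //.
by apply: (frac_field_id hD); rewrite ek; apply: (dplusm_K uw.1); rewrite -ek; apply: subringX.
Qed.

Lemma dplusm_RAV : rational_valuation_domain V -> subfield D -> root_ext F K -> RAV_domain R.
Proof.
move=> hrat hDf hr; have [m0 [Mm0 m00]] := hM0.
split; first by move=> hf; apply: dplusm_unit_notM (hf _ (M_dplusm Mm0) m00) Mm0.
exists m0; split=> [|y Ry y0 nuy]; first exact: M_dplusm.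
have My : M y by apply: NNPP => nMy; apply: nuy; apply: dplusm_notM_unit.
have [m [n [m_gt0 n_gt0 uw]]] := rational_valuation_pow_unit hM hrat My y0 Mm0 m00.
have [p p_gt0 uwp] := dplusm_unit_pow hDf hr uw.
exists (m * p)%N, (n * p)%N, ((y ^+ m / m0 ^+ n) ^+ p); rewrite !muln_gt0 m_gt0 n_gt0 p_gt0.
by do !split=> //; rewrite !exprM -exprMn divfK // expf_neq0.
Qed.

Lemma dplusm_local_AV : (local R /\ AV_domain R) <->
  (DVR V /\ same_set D F /\ finite_degree F K /\ root_ext F K).
Proof.
split=> [[[hN _] hAV]|[hDVR [hDF [hfin hr]]]].
  have hDf := noetherian_dplusm_subfield hN.
  split; first exact: noetherian_valuation_DVR hV hM hM0 (noetherian_dplusm_V hN).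
  split; first exact/(same_frac_field_subfield hD).
  by split; [exact: noetherian_dplusm_finite|exact: AV_dplusm_root].
have hDf := (same_frac_field_subfield hD).1 hDF.
by split; [split; [exact: dplusm_noetherian|exact: dplusm_quasilocal]|exact: dplusm_AV].
Qed.

Lemma dplusm_quasilocal_API : (quasilocal R /\ API_domain R) <->
  (DVR V /\ same_set D F /\ bounded_root_ext F K).
Proof.
split=> [[_ hAPI]|[hDVR [hDF hb]]].
  have hDf := API_dplusm_subfield hAPI.
  split; first exact: API_dplusm_DVR.
  by split; [exact/(same_frac_field_subfield hD)|exact: API_dplusm_bounded].
have hDf := (same_frac_field_subfield hD).1 hDF.
by split; [exact: dplusm_quasilocal|exact: dplusm_API].
Qed.

Lemma dplusm_local_API : (local R /\ API_domain R) <->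
  (DVR V /\ same_set D F /\ finite_degree F K /\ bounded_root_ext F K).
Proof.
split=> [[[hN hql] hAPI]|[hDVR [hDF [hfin hb]]]].
  have [hDVR [hDF hb]] := dplusm_quasilocal_API.1 (conj hql hAPI).
  by split=> //; split=> //; split=> //; exact: noetherian_dplusm_finite.
have [hql hAPI] := dplusm_quasilocal_API.2 (conj hDVR (conj hDF hb)).
split=> //; split=> //.
exact: dplusm_noetherian hDVR ((same_frac_field_subfield hD).1 hDF) hfin.
Qed.

Lemma dplusm_RAV_iff : RAV_domain R <->
  (rational_valuation_domain V /\ same_set D F /\ root_ext F K).
Proof.
split=> [hRAV|[hrat [hDF hr]]]; last exact: dplusm_RAV ((same_frac_field_subfield hD).1 hDF) hr.
have [a [ha Ma a0]] := RAV_dplusm_param hRAV.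
have hVa y : M y -> y != 0 -> exists m n w,
    (0 < m)%N /\ (0 < n)%N /\ unit_in V w /\ y ^+ m = w * a ^+ n.
  move=> My y0; have [m [n [w [m_gt0 [n_gt0 [uw e]]]]]] := ha.2 y (M_dplusm My) y0
    (fun uy => dplusm_unit_notM uy My).
  by exists m, n, w; split=> //; split=> //; split=> //; exact: (dplusm_unit_V uw).
split; first exact: (almost_uniformizer_rational hV hM Ma a0 hVa).
split; first exact/(same_frac_field_subfield hD)/(RAV_dplusm_subfield ha Ma).
exact: RAV_dplusm_root ha Ma.
Qed.

End DplusM.

Theorem theorem13 (L : fieldType) (V M K D : L -> Prop)
  (hVval : valuation_domain V)
  (hL : forall x : L, exists a b, V a /\ V b /\ b != 0 /\ x = a / b)
  (hM : maximal_ideal V M)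
  (hM0 : exists m, M m /\ m != 0)
  (hK : subfield K) (hKV : forall x, K x -> V x)
  (hVKM : forall v, V v -> exists k m, K k /\ M m /\ v = k + m)
  (hD : subring D) (hDK : forall x, D x -> K x) :
  let R := fun x => exists d m, D d /\ M m /\ x = d + m in
  let F := fun x => exists a b, D a /\ D b /\ b != 0 /\ x = a / b in
  (* (10) *)
  ((local R /\ AV_domain R) <->
     (DVR V /\ same_set D F /\ finite_degree F K /\ root_ext F K)) /\
  (* (11) *)
  ((quasilocal R /\ API_domain R) <->
     (DVR V /\ same_set D F /\ bounded_root_ext F K)) /\
  (* (12) *)
  ((local R /\ API_domain R) <->
     (DVR V /\ same_set D F /\ finite_degree F K /\ bounded_root_ext F K)) /\
  (* (13) *)
  (RAV_domain R <->
     (rational_valuation_domain V /\ same_set D F /\ root_ext F K)).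
Proof.
move=> R F.
split; first exact: dplusm_local_AV hVval hM hM0 hK hKV hVKM hD hDK.
split; first exact: dplusm_quasilocal_API hVval hM hM0 hK hKV hVKM hD hDK.
split; first exact: dplusm_local_API hVval hM hM0 hK hKV hVKM hD hDK.
exact: dplusm_RAV_iff hVval hM hM0 hK hKV hVKM hD hDK.
Qed.
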